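(* In the $\mathbf N$-agent system described in the context, let $\{\boldsymbol\mu_t^{\mathbf N}\}_{t\ge0}$ be the empirical joint state distributions induced by a policy $\boldsymbol\pi=\{\boldsymbol\pi_t\}_{t\ge0}$. Then for every $t\ge0$, $$\mathbb E\big|\boldsymbol\mu_{t+1}^{\mathbf N}-P^{\mathrm{MF}}(\boldsymbol\mu_t^{\mathbf N},\boldsymbol\pi_t)\big|_1\le C_P\sqrt{|\mathcal X||\mathcal U|}\frac1{N_{\mathrm{pop}}}\Big(\sum_{k\in[K]}\sqrt{N_k}\Big),$$ where $C_P=2+L_P$.
   Context: Fix $K\ge1$, $N_1,\dots,N_K\ge1$, $[K]=\{1,\dots,K\}$, $N_{\mathrm{pop}}=\sum_kN_k$, finite sets $\mathcal X,\mathcal U$, $\mathcal P(A)$ the probability distributions on $A$, $|\cdot|_1$ the $L_1$ norm, $L_P>0$. Agent $j\in[N_k]$ of class $k$ has state $x_{j,k}^t$ and action $u_{j,k}^t$; $\boldsymbol\mu_t^{\mathbf N}(x,k)=\frac1{N_{\mathrm{pop}}}\sum_{j=1}^{N_k}\mathbf 1(x_{j,k}^t=x)$, $\boldsymbol\nu_t^{\mathbf N}(u,k)=\frac1{N_{\mathrm{pop}}}\sum_{j=1}^{N_k}\mathbf 1(u_{j,k}^t=u)$. For each $k$, $P_k:\mathcal X\times\mathcal U\times\mathcal P(\mathcal X\times[K])\times\mathcal P(\mathcal U\times[K])\to\mathcal P(\mathcal X)$ satisfies $|P_k(x,u,\boldsymbol\mu_1,\boldsymbol\nu_1)-P_k(x,u,\boldsymbol\mu_2,\boldsymbol\nu_2)|_1\le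 L_P(|\boldsymbol\mu_1-\boldsymbol\mu_2|_1+|\boldsymbol\nu_1-\boldsymbol\nu_2|_1)$. A policy is $\boldsymbol\pi=\{\boldsymbol\pi_t\}_{t\ge0}$, $\boldsymbol\pi_t=(\pi_k^t)_k$, $\pi_k^t:\mathcal X\times\mathcal P(\mathcal X\times[K])\to\mathcal P(\mathcal U)$. Dynamics: conditioned on all states at time $t$, actions are independent across agents with $u_{j,k}^t\sim\pi_k^t(x_{j,k}^t,\boldsymbol\mu_t^{\mathbf N})$; conditioned on states and actions, next states are independent with $x_{j,k}^{t+1}\sim P_k(x_{j,k}^t,u_{j,k}^t,\boldsymbol\mu_t^{\mathbf N},\boldsymbol\nu_t^{\mathbf N})$. Mean-field: $\nu^{\mathrm{MF}}(\boldsymbol\mu,\boldsymbol\pi)(u,k)=\sum_x\pi_k(x,\boldsymbol\mu)(u)\boldsymbol\mu(x,k)$, $P^{\mathrm{MF}}(\boldsymbol\mu,\boldsymbol\pi)(x',k)=\sum_{x,u}\boldsymbol\mu(x,k)\pi_k(x,\boldsymbol\mu)(u)P_k(x,u,\boldsymbol\mu,\nu^{\mathrm{MF}}(\boldsymbol\mu,\boldsymbol\pi))(x')$. *)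

From HB Require Import structures.
From mathcomp Require Import all_boot all_order all_algebra.
From mathcomp Require Import reals.
Set Implicit Arguments. Unset Strict Implicit. Unset Printing Implicit Defensive.
Import Order.TTheory GRing.Theory Num.Theory.
Local Open Scope ring_scope.

Section MultiClassMF.
Variables (R : realType) (X U : finType) (K : nat) (N : 'I_K -> nat).

Definition agent := {k : 'I_K & 'I_(N k)}.
Definition cls (a : agent) : 'I_K := tag a.

Definition sconf := {ffun agent -> X}.
Definition aconf := {ffun agent -> U}.

Definition is_dist (A : finType) (p : {ffun A -> R}) : Prop :=
  (forall a, 0 <= p a) /\ \sum_a p a = 1.

Definition norm1 (A : finType) (p : {ffun A -> R}) : R := \sum_a `|p a|.

Definition Npop : nat := \sum_(k < K) N k.

Definition emp_mu (x : sconf) : {ffun X * 'I_K -> R} :=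
  [ffun p => (\sum_(a : agent | cls a == p.2) (x a == p.1)%:R) / Npop%:R].
Definition emp_nu (u : aconf) : {ffun U * 'I_K -> R} :=
  [ffun p => (\sum_(a : agent | cls a == p.2) (u a == p.1)%:R) / Npop%:R].

Definition kernelT := 'I_K -> X -> U -> {ffun X * 'I_K -> R} ->
  {ffun U * 'I_K -> R} -> {ffun X -> R}.
Definition policyT := 'I_K -> X -> {ffun X * 'I_K -> R} -> {ffun U -> R}.

Variables (P : kernelT) (pi : nat -> policyT).

Definition nu_MF (mu : {ffun X * 'I_K -> R}) (pit : policyT) : {ffun U * 'I_K -> R} :=
  [ffun p => \sum_x pit p.2 x mu p.1 * mu (x, p.2)].
Definition P_MF (mu : {ffun X * 'I_K -> R}) (pit : policyT) : {ffun X * 'I_K -> R} :=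
  [ffun p => \sum_x \sum_u mu (x, p.2) * pit p.2 x mu u *
                             P p.2 x u mu (nu_MF mu pit) p.1].

Definition act_prob (t : nat) (x : sconf) (u : aconf) : R :=
  \prod_a pi t (cls a) (x a) (emp_mu x) (u a).
Definition next_prob (x : sconf) (u : aconf) (x' : sconf) : R :=
  \prod_a P (cls a) (x a) (u a) (emp_mu x) (emp_nu u) (x' a).

Fixpoint law (init : {ffun sconf -> R}) (t : nat) : {ffun sconf -> R} :=
  match t with
  | 0 => init
  | t'.+1 => [ffun x' => \sum_x \sum_u
               law init t' x * act_prob t' x u * next_prob x u x']
  end.

Definition exp_dev (init : {ffun sconf -> R}) (t : nat) : R :=
  \sum_x \sum_u \sum_x'
    law init t x * act_prob t x u * next_prob x u x' *
    norm1 [ffun p => emp_mu x' p - P_MF (emp_mu x) (pi t) p].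

End MultiClassMF.

(* Fix the configuration x at time t and let nu be the empirical action distribution.
   Scaled by N_pop, the (y, k) entry of mu_{t+1} - P^MF(mu_t, pi_t) is a sum over the
   agents a of class k of
   - 1(x'_a = y) - P_a(u_a, nu)(y), centred given the actions;
   - P_a(u_a, nu)(y) - P_a(u_a, nu^MF)(y), whose L1 norm is at most L_P |nu - nu^MF|_1,
     and N_pop |nu - nu^MF|_1 is again a classwise sum of centred action indicators;
   - P_a(u_a, nu^MF)(y) - E_{u ~ pi_a} P_a(u, nu^MF)(y), centred over the actions.
   For independent centred g_a with sum_y g_a(y)^2 <= 1 the cross terms of
   E (sum_a g_a(y))^2 vanish, so Jensen and Cauchy-Schwarz give
   E sum_y |sum_a g_a(y)| <= sqrt(|Y| n) over a class of n agents.  Summing over the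
   classes gives (2 sqrt|X| + L_P sqrt|U|) sum_k sqrt(N_k). *)

From HB Require Import structures.
From mathcomp Require Import all_boot all_order all_algebra.
From mathcomp Require Import reals.
From mathcomp Require Import ring.
Set Implicit Arguments. Unset Strict Implicit. Unset Printing Implicit Defensive.
Import Order.TTheory GRing.Theory Num.Theory.
Local Open Scope ring_scope.

Section CauchySchwarz.
Variables (R : realFieldType) (A : finType).
Implicit Types (w h : A -> R).

Lemma sqr_sum_weighted_le w h : (forall a, 0 <= w a) ->
  (\sum_a w a * h a) ^+ 2 <= (\sum_a w a) * \sum_a w a * h a ^+ 2.
Proof.
move=> w_ge0.
have : 0 <= \sum_a \sum_b w a * w b * (h a - h b) ^+ 2.
  by apply: sumr_ge0 => a _; apply: sumr_ge0 => b _; rewrite mulr_ge0 ?sqr_ge0 ?mulr_ge0.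
suff -> : \sum_a \sum_b w a * w b * (h a - h b) ^+ 2 =
    2 * ((\sum_a w a) * (\sum_a w a * h a ^+ 2) - (\sum_a w a * h a) ^+ 2).
  by rewrite pmulr_rge0 // subr_ge0.
transitivity (\sum_a \sum_b (w a * (w b * h b ^+ 2) + w a * h a ^+ 2 * w b
                              - 2 * (w a * h a) * (w b * h b))).
  by apply: eq_bigr => a _; apply: eq_bigr => b _; ring.
under eq_bigr do rewrite sumrB big_split.
by rewrite sumrB big_split -!big_distrlr -mulr_sumr /=; ring.
Qed.

Lemma sqr_expect_le w h : (forall a, 0 <= w a) -> \sum_a w a = 1 ->
  (\sum_a w a * h a) ^+ 2 <= \sum_a w a * h a ^+ 2.
Proof. by move=> w_ge0 w_sum1; rewrite -[leRHS]mul1r -w_sum1 sqr_sum_weighted_le. Qed.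

Lemma sqr_sum_le_card_sum_sqr h :
  (\sum_a h a) ^+ 2 <= #|A|%:R * \sum_a h a ^+ 2.
Proof.
have := @sqr_sum_weighted_le (fun _ => 1) h (fun _ => ler01).
by rewrite sumr_const !(eq_bigr _ (fun a _ => mul1r _)).
Qed.

Lemma expect_sqr_centred w h : \sum_a w a = 1 ->
  \sum_a w a * (h a - \sum_b w b * h b) ^+ 2 =
  \sum_a w a * h a ^+ 2 - (\sum_a w a * h a) ^+ 2.
Proof.
move=> w_sum1; set m := \sum_b w b * h b.
transitivity (\sum_a w a * h a ^+ 2 - 2 * m * m + m ^+ 2 * \sum_a w a).
  rewrite [X in _ - X]mulr_sumr [X in _ + X]mulr_sumr -sumrB -big_split /=.
  by apply: eq_bigr => a _; ring.
by rewrite w_sum1; ring.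
Qed.

End CauchySchwarz.

Lemma le_sqrt_of_sqr_le (R : rcfType) (a b : R) : 0 <= a -> a ^+ 2 <= b -> a <= Num.sqrt b.
Proof.
move=> a_ge0 ab; rewrite -(ger0_norm a_ge0) -sqrtr_sqr ler_sqrt //.
exact: le_trans (sqr_ge0 a) ab.
Qed.

Lemma sum_sqrt_mul_le (R : rcfType) (I : finType) (a b : R) (c : I -> R) :
  0 <= a -> 1 <= b -> (forall i, 0 <= c i) ->
  \sum_i Num.sqrt (a * c i) <= Num.sqrt (a * b) * \sum_i Num.sqrt (c i).
Proof.
move=> a_ge0 b_ge1 c_ge0; rewrite mulr_sumr; apply: ler_sum => i _.
rewrite !sqrtrM // ler_wpM2r ?sqrtr_ge0 // ler_peMr ?sqrtr_ge0 //.
by rewrite -sqrtr1 ler_sqrt // (le_trans ler01).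
Qed.

Section ProductWeight.
Variables (R : rcfType) (I T : finType) (q : I -> T -> R).
Hypotheses (q_ge0 : forall i z, 0 <= q i z) (q_sum1 : forall i, \sum_z q i z = 1).

Definition prod_weight (f : {ffun I -> T}) : R := \prod_i q i (f i).

Definition centred i (h : T -> R) z : R := h z - \sum_z' q i z' * h z'.

Lemma prod_weight_ge0 f : 0 <= prod_weight f.
Proof. exact: prodr_ge0. Qed.

Lemma expect_prod (w : I -> T -> R) :
  \sum_f prod_weight f * \prod_i w i (f i) = \prod_i \sum_z q i z * w i z.
Proof.
by rewrite bigA_distr_bigA; apply: eq_bigr => f _; rewrite -big_split.
Qed.

Lemma expect_prod_in (S : {set I}) (w : I -> T -> R) :
  \sum_f prod_weight f * \prod_(i in S) w i (f i) = \prod_(i in S) \sum_z q i z * w i z.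
Proof.
pose w1 i z := if i \in S then w i z else 1.
transitivity (\prod_i \sum_z q i z * w1 i z).
  rewrite -expect_prod; apply: eq_bigr => f _; rewrite big_mkcond.
  by congr (_ * _); apply: eq_bigr => i _; rewrite /w1; case: (i \in S).
rewrite [RHS]big_mkcond; apply: eq_bigr => i _; rewrite /w1; case: (i \in S) => //.
by under eq_bigr do rewrite mulr1.
Qed.

Lemma sum_prod_weight : \sum_f prod_weight f = 1.
Proof.
transitivity (\sum_f prod_weight f * \prod_(i in set0 : {set I}) (1 : R)).
  by under [RHS]eq_bigr do rewrite big_set0 mulr1.
by rewrite (expect_prod_in _ (fun _ _ => 1)) big_set0.
Qed.

Lemma expect_coord a (h : T -> R) :
  \sum_f prod_weight f * h (f a) = \sum_z q a z * h z.
Proof.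
transitivity (\sum_f prod_weight f * \prod_(i in [set a]) h (f i)).
  by under [RHS]eq_bigr do rewrite big_set1.
by rewrite (expect_prod_in _ (fun _ => h)) big_set1.
Qed.

Lemma expect_coord2 a b (g : I -> T -> R) : a != b ->
  \sum_f prod_weight f * (g a (f a) * g b (f b)) =
  (\sum_z q a z * g a z) * \sum_z q b z * g b z.
Proof.
move=> neq_ab; have a_notin_b : a \notin [set b] by rewrite in_set1.
transitivity (\sum_f prod_weight f * \prod_(i in [set a; b]) g i (f i)).
  by under [RHS]eq_bigr do rewrite big_setU1 // big_set1.
by rewrite expect_prod_in big_setU1 // big_set1.
Qed.

Lemma expect_centred i h : \sum_z q i z * centred i h z = 0.
Proof.
under eq_bigr do rewrite /centred mulrBr.
by rewrite sumrB -mulr_suml q_sum1 mul1r subrr.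
Qed.

Lemma expect_sqr_centred_sum (S : pred I) (g : I -> T -> R) :
  \sum_f prod_weight f * (\sum_(i | S i) centred i (g i) (f i)) ^+ 2 =
  \sum_(i | S i) \sum_z q i z * centred i (g i) z ^+ 2.
Proof.
transitivity (\sum_(i | S i) \sum_(j | S j) \sum_f
                prod_weight f * (centred i (g i) (f i) * centred j (g j) (f j))).
  under eq_bigr do rewrite expr2 big_distrlr mulr_sumr; rewrite exchange_big /=.
  by apply: eq_bigr => i _; under eq_bigr do rewrite mulr_sumr; exact: exchange_big.
apply: eq_bigr => i Si; rewrite (bigD1 i) //= [X in _ + X]big1 ?addr0.
  rewrite -(expect_coord i (fun z => centred i (g i) z ^+ 2)).
  by apply: eq_bigr => f _; rewrite expr2.
move=> j /andP[_ neq_ji]; rewrite (expect_coord2 (fun k => centred k (g k))) 1?eq_sym //.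
by rewrite expect_centred mul0r.
Qed.

Lemma expect_abs_centred_sum_le (S : pred I) (g : I -> T -> R) :
  \sum_f prod_weight f * `|\sum_(i | S i) centred i (g i) (f i)|
  <= Num.sqrt (\sum_(i | S i) \sum_z q i z * g i z ^+ 2).
Proof.
apply: le_sqrt_of_sqr_le.
  by apply: sumr_ge0 => f _; rewrite mulr_ge0 ?prod_weight_ge0.
apply: le_trans (sqr_expect_le _ prod_weight_ge0 sum_prod_weight) _.
under eq_bigr do rewrite (real_normK (num_real _)).
rewrite expect_sqr_centred_sum; apply: ler_sum => i _.
by rewrite expect_sqr_centred // lerBlDr lerDl sqr_ge0.
Qed.

Definition class_dev (J Y : finType) (c : I -> J) (g : I -> Y -> T -> R)
    (f : {ffun I -> T}) : R :=
  \sum_j \sum_y `|\sum_(i | c i == j) centred i (g i y) (f i)|.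

Lemma expect_sum_abs_centred_sum_le (Y : finType) (S : pred I) (g : I -> Y -> T -> R) :
  (forall i z, \sum_y g i y z ^+ 2 <= 1) ->
  \sum_f prod_weight f * \sum_y `|\sum_(i | S i) centred i (g i y) (f i)|
  <= Num.sqrt (#|Y|%:R * #|S|%:R).
Proof.
move=> g_le1; pose V y := \sum_(i | S i) \sum_z q i z * g i y z ^+ 2.
have V_ge0 y : 0 <= V y.
  by apply: sumr_ge0 => i _; apply: sumr_ge0 => z _; rewrite mulr_ge0 ?sqr_ge0.
under eq_bigr do rewrite mulr_sumr; rewrite exchange_big /=.
apply: le_trans (_ : \sum_y Num.sqrt (V y) <= _).
  by apply: ler_sum => y _; exact: expect_abs_centred_sum_le.
apply: le_sqrt_of_sqr_le; first by apply: sumr_ge0 => y _; exact: sqrtr_ge0.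
apply: le_trans (sqr_sum_le_card_sum_sqr _) _; rewrite ler_wpM2l //.
under eq_bigr do rewrite sqr_sqrtr //.
rewrite /V exchange_big -sumr_const /=; apply: ler_sum => i _.
rewrite exchange_big /= -(q_sum1 i); apply: ler_sum => z _.
by rewrite -mulr_sumr ler_piMr.
Qed.

Lemma expect_class_dev_le (J Y : finType) (c : I -> J) (g : I -> Y -> T -> R) :
  (forall i z, \sum_y g i y z ^+ 2 <= 1) ->
  \sum_f prod_weight f * class_dev c g f
  <= \sum_j Num.sqrt (#|Y|%:R * #|[pred i | c i == j]|%:R).
Proof.
move=> g_le1; under eq_bigr do rewrite mulr_sumr; rewrite exchange_big /=.
by apply: ler_sum => j _; exact: expect_sum_abs_centred_sum_le.
Qed.

End ProductWeight.

Section Population.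
Variables (K : nat) (N : 'I_K -> nat).

Lemma card_class k : #|[pred a : agent N | cls a == k]| = N k.
Proof.
rewrite -sum1_card; transitivity (\sum_(i | i == k) \sum_(j : 'I_(N i)) 1)%N.
  by rewrite sig_big_dep; apply: eq_bigl => a; rewrite andbT.
by rewrite big_pred1_eq sum1_card card_ord.
Qed.

Lemma sum_agent_by_class (V : nmodType) (F : agent N -> V) :
  \sum_a F a = \sum_k \sum_(a | cls a == k) F a.
Proof. exact: (partition_big (@cls K N) xpredT). Qed.

Lemma sumr_const_agent (V : nmodType) (c : V) : \sum_(a : agent N) c = c *+ Npop N.
Proof.
rewrite sum_agent_by_class /Npop -sumrMnr.
by apply: eq_bigr => k _; rewrite sumr_const card_class.
Qed.

Lemma Npop_gt0 : (0 < K)%N -> (forall k, 0 < N k)%N -> (0 < Npop N)%N.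
Proof.
move=> K_gt0 N_gt0; rewrite /Npop (bigD1 (Ordinal K_gt0)) //=.
exact: leq_trans (N_gt0 _) (leq_addr _ _).
Qed.

Lemma sum_pair_class (V : nmodType) (Y : finType) (F : Y * 'I_K -> V) :
  \sum_p F p = \sum_k \sum_y F (y, k).
Proof. by rewrite [RHS]exchange_big pair_bigA; apply: eq_bigr => -[]. Qed.

Lemma sum_class_count (R : pzSemiRingType) (Y : finType) (v : agent N -> Y) k (G : Y -> R) :
  \sum_y (\sum_(a | cls a == k) (v a == y)%:R) * G y = \sum_(a | cls a == k) G (v a).
Proof.
under eq_bigr do rewrite mulr_suml; rewrite exchange_big /=; apply: eq_bigr => a _.
rewrite (bigD1 (v a)) //= eqxx mul1r big1 ?addr0 // => y neq_y.
by rewrite eq_sym (negbTE neq_y) mul0r.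
Qed.

End Population.

Lemma sum_sqr_indicator (R : pzSemiRingType) (A : finType) (z : A) :
  \sum_y ((z == y)%:R : R) ^+ 2 = 1.
Proof.
rewrite (bigD1 z) //= eqxx expr1n big1 ?addr0 // => y neq_y.
by rewrite eq_sym (negbTE neq_y) expr0n.
Qed.

Lemma sum_mul_indicator (R : pzSemiRingType) (A : finType) (f : A -> R) y :
  \sum_z f z * (z == y)%:R = f y.
Proof.
rewrite (bigD1 y) //= eqxx mulr1 big1 ?addr0 // => z neq_z.
by rewrite (negbTE neq_z) mulr0.
Qed.

Section Distributions.
Variables (R : realType) (A : finType).
Implicit Types (p : {ffun A -> R}).

Lemma dist_sum_sqr_le1 p : is_dist p -> \sum_a p a ^+ 2 <= 1.
Proof.
case=> p_ge0 p_sum1; rewrite -[leRHS]p_sum1; apply: ler_sum => a _.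
rewrite expr2 ler_piMr // -p_sum1 (bigD1 a) //= lerDl.
exact: sumr_ge0.
Qed.

Lemma dist_card_gt0 p : is_dist p -> (0 < #|A|)%N.
Proof.
case=> _ p_sum1; case: (posnP #|A|) => [A0|//]; move: p_sum1.
rewrite big1 => [/eqP|a _]; first by rewrite eq_sym oner_eq0.
by have := card0_eq A0 a; rewrite inE.
Qed.

End Distributions.

Section MeanFieldDeviation.
Variables (R : realType) (X U : finType) (K : nat) (N : 'I_K -> nat)
  (L_P : R) (P : kernelT R X U K) (pi : nat -> policyT R X U K).
Hypothesis K_gt0 : (0 < K)%N.
Hypothesis N_gt0 : forall k, (0 < N k)%N.
Hypothesis L_P_ge0 : 0 <= L_P.
Hypothesis P_dist :
  forall k x u mu nu, is_dist mu -> is_dist nu -> is_dist (P k x u mu nu).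
Hypothesis P_lipschitz : forall k x u mu1 nu1 mu2 nu2,
  is_dist mu1 -> is_dist nu1 -> is_dist mu2 -> is_dist nu2 ->
  norm1 [ffun y => P k x u mu1 nu1 y - P k x u mu2 nu2 y]
  <= L_P * (norm1 [ffun p => mu1 p - mu2 p] + norm1 [ffun p => nu1 p - nu2 p]).
Hypothesis pi_dist : forall t k x mu, is_dist mu -> is_dist (pi t k x mu).

Local Notation NP := ((Npop N)%:R : R).
Implicit Types (t : nat) (x : sconf X N) (u : aconf U N).

Lemma Npop_natr_gt0 : 0 < NP.
Proof. by rewrite ltr0n Npop_gt0. Qed.

Lemma emp_mu_dist (Y : finType) (v : {ffun agent N -> Y}) : is_dist (emp_mu R v).
Proof.
split=> [p|]; first by rewrite ffunE divr_ge0 ?ler0n ?sumr_ge0.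
rewrite sum_pair_class.
under eq_bigr => k _ do under eq_bigr => y _ do rewrite ffunE /=.
under eq_bigr => k _ do rewrite (sum_class_count _ _ (fun _ => NP^-1)).
rewrite -sum_agent_by_class sumr_const_agent.
by rewrite -[NP^-1 *+ _]mulr_natr mulVf // gt_eqF // Npop_natr_gt0.
Qed.

Lemma emp_nu_dist (u : aconf U N) : is_dist (emp_nu R u).
Proof. exact: emp_mu_dist. Qed.

Lemma nu_MF_dist t mu : is_dist mu -> is_dist (nu_MF mu (pi t)).
Proof.
move=> mu_dist; have [mu_ge0 mu_sum1] := mu_dist.
split=> [p|].
  rewrite ffunE; apply: sumr_ge0 => x _; rewrite mulr_ge0 //.
  by have [] := pi_dist t p.2 x mu_dist.
rewrite sum_pair_class -mu_sum1 sum_pair_class; apply: eq_bigr => k _.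
under eq_bigr do rewrite ffunE /=.
rewrite exchange_big /=; apply: eq_bigr => x _.
by rewrite -mulr_suml; have [_ ->] := pi_dist t k x mu_dist; rewrite mul1r.
Qed.

Definition agent_policy t x a z : R :=
  pi t (cls a) (x a) (emp_mu R x) z.
Definition agent_kernel x u a y : R :=
  P (cls a) (x a) (u a) (emp_mu R x) (emp_nu R u) y.
Definition mf_kernel t x a z y : R :=
  P (cls a) (x a) z (emp_mu R x) (nu_MF (emp_mu R x) (pi t)) y.

Lemma agent_policy_ge0 t x a z : 0 <= agent_policy t x a z.
Proof. exact: (proj1 (pi_dist t (cls a) (x a) (emp_mu_dist x)) z). Qed.

Lemma sum_agent_policy t x a : \sum_z agent_policy t x a z = 1.
Proof. exact: (proj2 (pi_dist t (cls a) (x a) (emp_mu_dist x))). Qed.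

Lemma agent_kernel_ge0 x u a y : 0 <= agent_kernel x u a y.
Proof. exact: (proj1 (P_dist (cls a) (x a) (u a) (emp_mu_dist x) (emp_nu_dist u)) y). Qed.

Lemma sum_agent_kernel x u a : \sum_y agent_kernel x u a y = 1.
Proof. exact: (proj2 (P_dist (cls a) (x a) (u a) (emp_mu_dist x) (emp_nu_dist u))). Qed.

Lemma mf_kernel_dist t x a z : is_dist [ffun y => mf_kernel t x a z y].
Proof.
have := P_dist (cls a) (x a) z (emp_mu_dist x) (nu_MF_dist t (emp_mu_dist x)).
by congr is_dist; apply/ffunP => y; rewrite ffunE.
Qed.

Lemma act_prob_prod_weight t x u : act_prob pi t x u = prod_weight (agent_policy t x) u.
Proof. by []. Qed.

Lemma next_prob_prod_weight x u x' : next_prob P x u x' = prod_weight (agent_kernel x u) x'.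
Proof. by []. Qed.

Lemma sum_act_prob t x : \sum_u act_prob pi t x u = 1.
Proof. exact: (sum_prod_weight (sum_agent_policy t x)). Qed.

Lemma sum_next_prob x u : \sum_x' next_prob P x u x' = 1.
Proof. exact: (sum_prod_weight (sum_agent_kernel x u)). Qed.

Lemma act_prob_ge0 t x u : 0 <= act_prob pi t x u.
Proof. exact: (prod_weight_ge0 (agent_policy_ge0 t x)). Qed.

Lemma next_prob_ge0 x u x' : 0 <= next_prob P x u x'.
Proof. exact: (prod_weight_ge0 (agent_kernel_ge0 x u)). Qed.

Lemma nu_MF_emp t x v k :
  nu_MF (emp_mu R x) (pi t) (v, k) = (\sum_(a | cls a == k) agent_policy t x a v) / NP.
Proof.
rewrite ffunE /= mulr_suml.
under eq_bigr do rewrite ffunE /= mulrCA.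
rewrite (sum_class_count _ _ (fun y => pi t k y (emp_mu R x) v / NP)).
by apply: eq_bigr => a /eqP <-.
Qed.

Lemma P_MF_emp t x y k :
  P_MF P (emp_mu R x) (pi t) (y, k) =
  (\sum_(a | cls a == k) \sum_z agent_policy t x a z * mf_kernel t x a z y) / NP.
Proof.
rewrite ffunE /= mulr_suml.
under eq_bigr do rewrite ffunE /=.
under eq_bigr do (under eq_bigr do rewrite -!mulrA; rewrite -mulr_sumr).
rewrite (sum_class_count _ _ (fun s : X => \sum_z NP^-1 * (pi t k s (emp_mu R x) z *
                    P k s z (emp_mu R x) (nu_MF (emp_mu R x) (pi t)) y))).
apply: eq_bigr => a /eqP <-; rewrite mulr_suml.
by apply: eq_bigr => z _; rewrite mulrC.
Qed.

Definition state_noise x u x' : R :=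
  class_dev (agent_kernel x u) (@cls K N) (fun _ (y z : X) => (z == y)%:R) x'.
Definition action_noise t x u : R :=
  class_dev (agent_policy t x) (@cls K N) (fun _ (v z : U) => (z == v)%:R) u.
Definition kernel_noise t x u : R :=
  class_dev (agent_policy t x) (@cls K N) (fun a (y : X) z => mf_kernel t x a z y) u.

Lemma expect_state_noise_le x u :
  \sum_x' next_prob P x u x' * state_noise x u x'
  <= \sum_k Num.sqrt (#|X|%:R * (N k)%:R).
Proof.
under eq_bigr do rewrite next_prob_prod_weight.
apply: le_trans (expect_class_dev_le (agent_kernel_ge0 x u) (sum_agent_kernel x u) _ _) _.
  by move=> a z; rewrite sum_sqr_indicator.
by under eq_bigr do rewrite card_class.
Qed.

Lemma expect_action_noise_le t x :
  \sum_u act_prob pi t x u * action_noise t x u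
  <= \sum_k Num.sqrt (#|U|%:R * (N k)%:R).
Proof.
under eq_bigr do rewrite act_prob_prod_weight.
apply: le_trans (expect_class_dev_le (agent_policy_ge0 t x) (sum_agent_policy t x) _ _) _.
  by move=> a z; rewrite sum_sqr_indicator.
by under eq_bigr do rewrite card_class.
Qed.

Lemma expect_kernel_noise_le t x :
  \sum_u act_prob pi t x u * kernel_noise t x u
  <= \sum_k Num.sqrt (#|X|%:R * (N k)%:R).
Proof.
under eq_bigr do rewrite act_prob_prod_weight.
apply: le_trans (expect_class_dev_le (agent_policy_ge0 t x) (sum_agent_policy t x) _ _) _.
  move=> a z; have := dist_sum_sqr_le1 (mf_kernel_dist t x a z).
  by under eq_bigr do rewrite ffunE.
by under eq_bigr do rewrite card_class.
Qed.

Lemma Npop_mul_norm_div (r : R) : NP * `|r / NP| = `|r|.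
Proof.
have NP_neq0 : NP != 0 by rewrite gt_eqF ?Npop_natr_gt0.
by rewrite normrM [`|NP^-1|]ger0_norm ?invr_ge0 ?ler0n // mulrCA mulfV // mulr1.
Qed.

Lemma Npop_mul_norm1_emp_nu_sub_nu_MF t x u :
  NP * norm1 [ffun p => emp_nu R u p - nu_MF (emp_mu R x) (pi t) p] = action_noise t x u.
Proof.
rewrite /norm1 sum_pair_class mulr_sumr; apply: eq_bigr => k _.
rewrite mulr_sumr; apply: eq_bigr => v _.
rewrite ffunE nu_MF_emp ffunE /= -mulrBl Npop_mul_norm_div -sumrB.
by congr `|_|; apply: eq_bigr => a _; rewrite /centred sum_mul_indicator.
Qed.

Lemma Npop_mul_norm1_deviation_le t x u x' :
  NP * norm1 [ffun p => emp_mu R x' p - P_MF P (emp_mu R x) (pi t) p]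
  <= state_noise x u x'
     + \sum_a norm1 [ffun y => agent_kernel x u a y - mf_kernel t x a (u a) y]
     + kernel_noise t x u.
Proof.
pose A k y := \sum_(a | cls a == k)
  centred (agent_kernel x u) a (fun z => (z == y)%:R) (x' a).
pose B k y := \sum_(a | cls a == k) (agent_kernel x u a y - mf_kernel t x a (u a) y).
pose C k y := \sum_(a | cls a == k)
  centred (agent_policy t x) a (fun z => mf_kernel t x a z y) (u a).
have B_le : \sum_k \sum_y `|B k y|
            <= \sum_a norm1 [ffun y => agent_kernel x u a y - mf_kernel t x a (u a) y].
  rewrite sum_agent_by_class; apply: ler_sum => k _.
  under [X in _ <= X]eq_bigr do rewrite /norm1.
  rewrite [X in _ <= X]exchange_big /=; apply: ler_sum => y _.
  by under [X in _ <= X]eq_bigr do rewrite ffunE; exact: ler_norm_sum.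
have D_eq k y : NP * `|emp_mu R x' (y, k) - P_MF P (emp_mu R x) (pi t) (y, k)|
                = `|A k y + B k y + C k y|.
  rewrite P_MF_emp ffunE /= -mulrBl Npop_mul_norm_div -sumrB -!big_split /=.
  by congr `|_|; apply: eq_bigr => a _; rewrite /centred sum_mul_indicator; ring.
apply: le_trans (_ : \sum_k \sum_y (`|A k y| + `|B k y| + `|C k y|) <= _).
  rewrite /norm1 sum_pair_class mulr_sumr; apply: ler_sum => k _.
  rewrite mulr_sumr; apply: ler_sum => y _; rewrite ffunE /= D_eq.
  by apply: le_trans (ler_normD _ _) _; rewrite lerD2r ler_normD.
under eq_bigr do rewrite !big_split; rewrite !big_split /=.
by rewrite lerD2r lerD2l.
Qed.

Lemma sum_kernel_shift_le t x u :
  \sum_a norm1 [ffun y => agent_kernel x u a y - mf_kernel t x a (u a) y]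
  <= L_P * action_noise t x u.
Proof.
have shift_le a : norm1 [ffun y => agent_kernel x u a y - mf_kernel t x a (u a) y]
    <= L_P * norm1 [ffun p => emp_nu R u p - nu_MF (emp_mu R x) (pi t) p].
  have := P_lipschitz (cls a) (x a) (u a) (emp_mu_dist x) (emp_nu_dist u)
                      (emp_mu_dist x) (nu_MF_dist t (emp_mu_dist x)).
  suff -> : norm1 [ffun p => emp_mu R x p - emp_mu R x p] = 0 by rewrite add0r.
  by rewrite /norm1 big1 // => p _; rewrite ffunE subrr normr0.
apply: le_trans (ler_sum _ (fun a _ => shift_le a)) _.
rewrite sumr_const_agent -Npop_mul_norm1_emp_nu_sub_nu_MF.
by rewrite -[_ *+ Npop N]mulr_natr mulrCA mulrC.
Qed.

Lemma Npop_mul_expect_deviation_le t x :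
  NP * \sum_u \sum_x' act_prob pi t x u * next_prob P x u x' *
         norm1 [ffun p => emp_mu R x' p - P_MF P (emp_mu R x) (pi t) p]
  <= 2 * \sum_k Num.sqrt (#|X|%:R * (N k)%:R) + L_P * \sum_k Num.sqrt (#|U|%:R * (N k)%:R).
Proof.
set SX := \sum_k Num.sqrt (#|X|%:R * _); set SU := \sum_k Num.sqrt (#|U|%:R * _).
have cond_le u : NP * \sum_x' next_prob P x u x' *
                   norm1 [ffun p => emp_mu R x' p - P_MF P (emp_mu R x) (pi t) p]
                 <= SX + (L_P * action_noise t x u + kernel_noise t x u).
  rewrite mulr_sumr; apply: le_trans (_ : \sum_x' next_prob P x u x' *
      (state_noise x u x' + (L_P * action_noise t x u + kernel_noise t x u)) <= _).
    apply: ler_sum => x' _; rewrite mulrCA ler_wpM2l ?next_prob_ge0 // addrA.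
    apply: le_trans (Npop_mul_norm1_deviation_le t x u x') _.
    by rewrite lerD2r lerD2l sum_kernel_shift_le.
  under eq_bigr do rewrite mulrDr; rewrite big_split /= -mulr_suml sum_next_prob mul1r.
  by rewrite lerD2r; exact: expect_state_noise_le.
rewrite mulr_sumr; apply: le_trans (_ : \sum_u act_prob pi t x u *
    (SX + (L_P * action_noise t x u + kernel_noise t x u)) <= _).
  apply: ler_sum => u _; under eq_bigr do rewrite -!mulrA.
  by rewrite -mulr_sumr mulrCA ler_wpM2l ?act_prob_ge0 ?cond_le.
under eq_bigr do rewrite !mulrDr mulrCA.
rewrite !big_split /= -mulr_suml sum_act_prob mul1r -mulr_sumr.
apply: le_trans (lerD (lexx SX) (lerD (ler_wpM2l L_P_ge0 (expect_action_noise_le t x))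
                                    (expect_kernel_noise_le t x))) _.
by rewrite addrCA -mulr2n [2 * SX]mulr_natl addrC.
Qed.

Lemma expect_deviation_le t x :
  \sum_u \sum_x' act_prob pi t x u * next_prob P x u x' *
    norm1 [ffun p => emp_mu R x' p - P_MF P (emp_mu R x) (pi t) p]
  <= (2 + L_P) * Num.sqrt ((#|X| * #|U|)%:R) / NP * \sum_k Num.sqrt (N k)%:R.
Proof.
pose a0 : agent N := Tagged (fun k => 'I_(N k)) (Ordinal (N_gt0 (Ordinal K_gt0))).
have X_gt0 : (0 < #|X|)%N by apply/card_gt0P; exists (x a0).
have U_gt0 := dist_card_gt0 (pi_dist t (cls a0) (x a0) (emp_mu_dist x)).
have ge1 n : (0 < n)%N -> 1 <= n%:R :> R by rewrite ler1n.
have sqrtX := sum_sqrt_mul_le (ler0n _ #|X|) (ge1 _ U_gt0) (fun k => ler0n _ (N k)).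
have sqrtU := sum_sqrt_mul_le (ler0n _ #|U|) (ge1 _ X_gt0) (fun k => ler0n _ (N k)).
rewrite mulrAC ler_pdivlMr ?Npop_natr_gt0 // mulrC natrM.
apply: le_trans (Npop_mul_expect_deviation_le t x) _.
rewrite [#|U|%:R * #|X|%:R]mulrC in sqrtU.
apply: le_trans (lerD (ler_wpM2l (ler0n _ 2) sqrtX) (ler_wpM2l L_P_ge0 sqrtU)) _.
by rewrite !mulrDl !mulrA.
Qed.

Lemma law_dist (init : {ffun sconf X N -> R}) t : is_dist init -> is_dist (law P pi init t).
Proof.
case=> init_ge0 init_sum1; elim: t => [|t [law_ge0 law_sum1]] //=; split=> [x'|].
  rewrite ffunE; apply: sumr_ge0 => x _; apply: sumr_ge0 => u _.
  by rewrite !mulr_ge0 ?act_prob_ge0 ?next_prob_ge0.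
under eq_bigr do rewrite ffunE; rewrite exchange_big /= -law_sum1.
apply: eq_bigr => x _; rewrite exchange_big /= -[RHS]mulr1 -(sum_act_prob t x) mulr_sumr.
by apply: eq_bigr => u _; rewrite -mulr_sumr sum_next_prob mulr1.
Qed.

End MeanFieldDeviation.

Unset Implicit Arguments.
Set Strict Implicit.

Theorem lemma8 (R : realType) (X U : finType) (K : nat) (N : 'I_K -> nat)
  (L_P : R) (P : kernelT R X U K) (pi : nat -> policyT R X U K)
  (init : {ffun sconf X N -> R}) :
  (0 < K)%N ->
  (forall k, 0 < N k)%N ->
  0 < L_P ->
  (* each P_k maps distributions to a distribution on X *)
  (forall k x u mu nu, is_dist mu -> is_dist nu -> is_dist (P k x u mu nu)) ->
  (* Lipschitz continuity of P_k in the mean-field arguments *)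
  (forall k x u mu1 nu1 mu2 nu2,
      is_dist mu1 -> is_dist nu1 -> is_dist mu2 -> is_dist nu2 ->
      norm1 [ffun y => P k x u mu1 nu1 y - P k x u mu2 nu2 y]
      <= L_P * (norm1 [ffun p => mu1 p - mu2 p] + norm1 [ffun p => nu1 p - nu2 p])) ->
  (* each pi_k^t maps into distributions on U *)
  (forall t k x mu, is_dist mu -> is_dist (pi t k x mu)) ->
  (* arbitrary initial law of the joint state configuration *)
  is_dist init ->
  forall t : nat,
    exp_dev P pi init t
    <= (2 + L_P) * Num.sqrt ((#|X| * #|U|)%:R) / (Npop N)%:R *
       \sum_(k < K) Num.sqrt ((N k)%:R).
Proof.
move=> K_gt0 N_gt0 L_P_gt0 P_dist P_lipschitz pi_dist init_dist t.
have [law_ge0 law_sum1] := law_dist K_gt0 N_gt0 P_dist pi_dist t init_dist.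
have -> : exp_dev P pi init t = \sum_x law P pi init t x *
    \sum_u \sum_x' act_prob pi t x u * next_prob P x u x' *
      norm1 [ffun p => emp_mu R x' p - P_MF P (emp_mu R x) (pi t) p].
  apply: eq_bigr => x _; rewrite mulr_sumr; apply: eq_bigr => u _.
  by rewrite mulr_sumr; apply: eq_bigr => x' _; rewrite !mulrA.
set B := (2 + L_P) * _ / _ * _.
rewrite -[B]mul1r -law_sum1 mulr_suml; apply: ler_sum => x _; rewrite ler_wpM2l //.
exact: (expect_deviation_le K_gt0 N_gt0 (ltW L_P_gt0) P_dist P_lipschitz pi_dist).
Qed.
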